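(* Let $w\geqslant2$ and $h=2^d$, $d\in\mathbb{N}$. Then $|\mathcal{H}_{h,w}|=w\cdot h$, where $\mathcal{H}_{h,w}$ is the set of fast Hough transform patterns on the $h\times w$ image.
   Context: Image: the set of pixels $p_{ij}$, $i=0,\dots,h-1$ (row, from the bottom), $j=0,\dots,w-1$ (column). A pattern is a nonempty set of pixels. For a pattern $T$ with exactly one pixel in each of its rows, $\Delta(T)=(j_{top}-j_{bot})\bmod w$ (column indices of topmost and bottommost pixels), $\mathit{tran}_{a,b}(T)=\{p_{i+a,\,(j+b)\bmod w}\mid p_{ij}\in T\}$. Define $\mathcal{H}_0=\{\{p_{0j}\}\mid j=0,\dots,w-1\}$, $\mathcal{H}_k=\{T\cup\mathit{tran}_{2^{k-1},\,\Delta(T)+s}(T)\mid T\in\mathcal{H}_{k-1},\ s\in\{0,1\}\}$ for $k=1,\dots,d$, and $\mathcal{H}_{h,w}=\mathcal{H}_d$ (as a set of distinct patterns). *)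

From mathcomp Require Import all_boot.
From mathcomp Require Import finmap.
Set Implicit Arguments. Unset Strict Implicit. Unset Printing Implicit Defensive.
Local Open Scope fset_scope.

(* A pixel p_{ij} is the pair (i, j) : nat * nat (i = row from the bottom,
   j = column, 0 <= j < w).  A pattern is a finite set of pixels. *)
Definition pixel := (nat * nat)%type.
Definition pattern := {fset pixel}.

Definition top_row (T : pattern) : nat := \max_(p <- T) p.1.
Definition bot_row (T : pattern) : nat := \big[minn/top_row T]_(p <- T) p.1.

(* column of the (unique, for the patterns considered) pixel of T in row r *)
Definition col_at (T : pattern) (r : nat) : nat :=
  head 0 [seq p.2 | p <- T & p.1 == r].

(* Delta(T) = (j_top - j_bot) mod w, computed in Z/wZ as nat *)
Definition Delta (w : nat) (T : pattern) : nat :=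
  (col_at T (top_row T) + (w - col_at T (bot_row T) %% w)) %% w.

Definition tran (w a b : nat) (T : pattern) : pattern :=
  [fset ((p.1 + a)%N, ((p.2 + b) %% w)%N) | p in T].

Fixpoint Hk (w k : nat) : {fset pattern} :=
  match k with
  | 0 => [fset [fset ((0%N, j) : pixel)] | j in iota 0 w]
  | k'.+1 =>
      [fset T `|` tran w (2 ^ k') (Delta w T + s) T
         | T in Hk w k', s in [:: 0; 1]]
  end.

Definition HT (d w : nat) : {fset pattern} := Hk w d.

From mathcomp Require Import all_boot.
From mathcomp Require Import finmap.
Local Open Scope fset_scope.
Set Implicit Arguments. Unset Strict Implicit. Unset Printing Implicit Defensive.

(* Every pattern of H_k is the graph of a column function on the rows
   [0, 2^k).  The step T |-> T u tran_{2^k, b}(T) stacks a shifted copy of T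
   on top of it, so from the result one reads back T (its lower half) and
   b mod w (the column of row 2^k minus that of row 0).  As the two shifts
   Delta(T) and Delta(T)+1 differ mod w when w >= 2, each step is injective
   on H_k x {0, 1}, which doubles the count, starting from |H_0| = w. *)

Definition graph_on (n : nat) (f : nat -> nat) (T : pattern) : Prop :=
  forall p : pixel, (p \in T) = (p.1 < n) && (p.2 == f p.1).

Definition stack_col (w n b : nat) (f : nat -> nat) (r : nat) : nat :=
  if r < n then f r else (f (r - n) + b) %% w.

Lemma in_tran w a b T p :
  (p \in tran w a b T) = [exists q : T, p == ((val q).1 + a, ((val q).2 + b) %% w)%N].
Proof.
apply/imfsetP/existsP => [[q qT ->]|[q /eqP ->]]; first by exists [` qT].
by exists (val q) => //; apply: valP.
Qed.

Lemma graph_on_col n f g T :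
  graph_on n f T -> graph_on n g T -> forall r, r < n -> f r = g r.
Proof.
move=> Tf Tg r lt_rn.
have : (r, f r) \in T by rewrite Tf /= lt_rn eqxx.
by rewrite Tg /= => /andP [_ /eqP].
Qed.

Lemma graph_on_eq n f g T1 T2 :
  graph_on n f T1 -> graph_on n g T2 -> (forall r, r < n -> f r = g r) -> T1 = T2.
Proof.
move=> T1f T2g fg; apply/fsetP => -[r c]; rewrite T1f T2g /=.
by case: ltnP => // /fg ->.
Qed.

Lemma graph_on_union_tran w n b f T :
  graph_on n f T -> graph_on n.*2 (stack_col w n b f) (T `|` tran w n b T).
Proof.
move=> Tf [r c]; rewrite in_fsetU in_tran Tf /stack_col /= -addnn.
case: ltnP => [lt_rn|le_nr] /=.
  rewrite ltn_addr //; case: (c == f r) => //=.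
  apply/negbTE/existsP => -[q /eqP [r_eq _]].
  by move: lt_rn; rewrite r_eq ltnNge leq_addl.
apply/existsP/andP => [[q /eqP [-> ->]]|[lt_r2n /eqP ->]].
  have := valP q; rewrite Tf => /andP [lt_qn /eqP ->].
  by rewrite addnK ltn_add2r lt_qn.
have T_r : (r - n, f (r - n)) \in T by rewrite Tf /= eqxx andbT ltn_subLR.
by exists [` T_r]; rewrite /= subnK.
Qed.

Lemma union_tran_inj w n b1 b2 f1 f2 T1 T2 : 0 < n ->
  graph_on n f1 T1 -> graph_on n f2 T2 ->
  T1 `|` tran w n b1 T1 = T2 `|` tran w n b2 T2 ->
  T1 = T2 /\ b1 = b2 %[mod w].
Proof.
move=> n_gt0 T1f1 T2f2 eqU.
have U1 := graph_on_union_tran w b1 T1f1.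
have U2 := graph_on_union_tran w b2 T2f2; rewrite -eqU in U2.
have eq_col := graph_on_col U1 U2.
have lt_double r : r <= n -> r < n.*2 by move=> le_rn; rewrite -addnn -addn1 leq_add.
have f12 r : r < n -> f1 r = f2 r.
  by move=> lt_rn; have := eq_col r (lt_double r (ltnW lt_rn)); rewrite /stack_col lt_rn.
split; first exact: graph_on_eq T1f1 T2f2 f12.
have := eq_col n (lt_double n (leqnn n)); rewrite /stack_col ltnn subnn f12 //.
by move=> /eqP; rewrite eqn_modDl => /eqP.
Qed.

Lemma Hk_graph w k T : T \in Hk w k -> exists f, graph_on (2 ^ k) f T.
Proof.
elim: k T => [|k IH] T /=.
  move=> /imfsetP [j _ ->]; exists (fun _ => j) => -[r c].
  by rewrite in_fset1 xpair_eqE expn0 ltnS leqn0.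
move=> /imfset2P [T' /IH [f T'f] [s _ ->]].
by rewrite expnS mul2n; eexists; apply: graph_on_union_tran.
Qed.

Lemma card_Hk0 w : #|` Hk w 0| = w.
Proof.
rewrite /= card_in_imfset /= ?undup_id ?iota_uniq ?size_iota //.
by move=> i j _ _ /fsetP /(_ (0, i)); rewrite !in_fset1 eqxx => /esym/eqP [].
Qed.

Lemma card_HkS w k : 2 <= w -> #|` Hk w k.+1| = (2 * #|` Hk w k|)%N.
Proof.
move=> w_ge2 /=; rewrite [LHS](perm_size (enum_imfset2 _ _)).
  by rewrite size_allpairs mulnC.
move=> [T1 s1] [T2 s2]; rewrite !inE /= => /andP [/Hk_graph [f1 T1f1] s1_01].
move=> /andP [/Hk_graph [f2 T2f2] s2_01] /(union_tran_inj (expn_gt0 2 k) T1f1 T2f2).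
move=> [<- /eqP]; rewrite eqn_modDl => /eqP.
by case/orP: s1_01 => /eqP ->; case/orP: s2_01 => /eqP ->; rewrite ?mod0n ?modn_small.
Qed.

Theorem proposition6 (w d : nat) : 2 <= w -> #|` HT d w| = (w * 2 ^ d)%N.
Proof.
move=> w_ge2; rewrite /HT; elim: d => [|d IH].
  by rewrite card_Hk0 muln1.
by rewrite card_HkS // IH expnS mulnCA.
Qed.
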